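(* Let $\lambda$ be a nonempty partition and $\tau=(i,j)$ a corner cell of its Young diagram ($j=\lambda_i$ and either $i=\ell$ or $\lambda_{i+1}<\lambda_i$). Let $\hat\lambda$ be $\lambda$ with the cell $\tau$ removed, $\alpha=(\lambda_1-j,\dots,\lambda_{i-1}-j)$ (zero parts discarded) and $\beta=(\lambda_{i+1},\dots,\lambda_\ell)$. Then $$N(\lambda)=N(\hat\lambda)\cdot N(\mathbb 1)+N(\alpha)\cdot N(\beta)=N(\hat\lambda)+N(\alpha)\,N(\beta).$$
   Context: A partition $\lambda=(\lambda_1\ge\dots\ge\lambda_\ell>0)$ is identified with its Young (Ferrers) diagram $\{(r,c):1\le r\le\ell,\ 1\le c\le\lambda_r\}$. For partitions $\mu,\lambda$, $\mu\subseteq\lambda$ means $\mu_k\le\lambda_k$ for all $k$. The Ferrers set $\mathcal F(\lambda)$ is the set of all partitions $\mu\subseteq\lambda$ (including the empty one), equivalently the set of Dyck/lattice paths whose Ferrers diagram is contained in that of $\lambda$; $N(\lambda)=|\mathcal F(\lambda)|$, and the empty diagram $\mathbb 1$ has $N(\mathbb 1)=1$. *)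

From mathcomp Require Import all_boot.
Set Implicit Arguments. Unset Strict Implicit. Unset Printing Implicit Defensive.

(* A partition is a finite weakly decreasing sequence of positive integers
   (lambda_1 >= ... >= lambda_l > 0), stored 0-indexed: nth 0 la k = lambda_(k+1). *)
Definition is_partition (la : seq nat) : bool :=
  sorted geq la && all (fun x => 0 < x) la.

(* Ferrers set F(la): partitions mu with mu_k <= la_k for all k.  Since mu_k <= la_k
   forces size mu <= size la, such a mu is encoded by padding it with zeros to length
   size la: a weakly decreasing function f : 'I_(size la) -> nat with f k <= la_k
   (values bounded by la_1, hence in 'I_(la_1 + 1)).  This is a bijection. *)
Definition ferrers_set (la : seq nat) :
    {set {ffun 'I_(size la) -> 'I_(head 0 la).+1}} :=
  [set f : {ffun 'I_(size la) -> 'I_(head 0 la).+1} | [forall k : 'I_(size la), forall m : 'I_(size la),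
              (k <= m) ==> (f m <= f k)]
           && [forall k : 'I_(size la), f k <= nth 0 la k]].

Definition N (la : seq nat) : nat := #|ferrers_set la|.

(* la with the cell in row i (0-indexed) and column la_i removed (zero parts dropped). *)
Definition remove_cell (la : seq nat) (i : nat) : seq nat :=
  [seq x <- set_nth 0 la i (nth 0 la i).-1 | 0 < x].

Definition alpha_part (la : seq nat) (i j : nat) : seq nat :=
  [seq x <- [seq y - j | y <- take i la] | 0 < x].

Definition beta_part (la : seq nat) (i : nat) : seq nat := drop i.+1 la.

From mathcomp Require Import all_boot zify.
Set Implicit Arguments. Unset Strict Implicit. Unset Printing Implicit Defensive.

(* Split
   the count on whether mu contains the corner cell (i,j): those avoiding it are
   the subpartitions of la with the corner removed; for those containing it,
   the rows above the corner have at least j cells, so subtracting j from them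
   leaves an arbitrary subpartition of alpha, and independently the rows below
   form an arbitrary subpartition of beta. *)

Lemma geq_trans : transitive geq.
Proof. exact: rev_trans leq_trans. Qed.

(* The subpartitions of la with first part at most b, padded to size la. *)
Fixpoint subpart_seqs (la : seq nat) (b : nat) : seq (seq nat) :=
  if la is x :: l then
    flatten [seq [seq v :: s | s <- subpart_seqs l v] | v <- iota 0 (minn x b).+1]
  else [:: [::]].

Lemma subpart_seqs_cons x l b : subpart_seqs (x :: l) b =
  flatten [seq [seq v :: s | s <- subpart_seqs l v] | v <- iota 0 (minn x b).+1].
Proof. by []. Qed.

Definition nsubpart (la : seq nat) (b : nat) : nat := size (subpart_seqs la b).

Lemma nsubpart_cons x l b :
  nsubpart (x :: l) b = \sum_(0 <= v < (minn x b).+1) nsubpart l v.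
Proof.
rewrite /nsubpart subpart_seqs_cons size_flatten /shape -map_comp sumnE big_map.
rewrite /index_iota subn0.
by apply: eq_bigr => v _ /=; rewrite size_map.
Qed.

Lemma subpart_seqs_uniq la b : uniq (subpart_seqs la b).
Proof.
elim: la b => // x l IHl b; rewrite subpart_seqs_cons.
elim: (iota 0 _) (iota_uniq 0 (minn x b).+1) => //= v vs IHvs /andP[v_vs uniq_vs].
rewrite cat_uniq IHvs // andbT map_inj_uniq ?IHl //; last by move=> ? ? [].
apply/hasPn => _ /flatten_mapP[w w_vs /mapP[t _ ->]].
by apply/mapP => -[t' _ [eq_wv _]]; rewrite -eq_wv w_vs in v_vs.
Qed.

Lemma mem_subpart_seqs la b s :
  (s \in subpart_seqs la b) =
  [&& size s == size la, sorted geq (b :: s) & all2 leq s la].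
Proof.
elim: la b s => [|x l IHl] b [|v t] //; rewrite subpart_seqs_cons.
  by apply/negbTE/flatten_mapP => -[v _ /mapP[]].
apply/flatten_mapP/and3P => [[w] | [/eqP[sz_t] /andP[vb path_t] /andP[vx le_tl]]].
  rewrite mem_iota add0n ltnS leq_min => /and3P[_ vx vb] /mapP[t' + [-> ->]].
  by rewrite IHl /= eqSS vx vb => /and3P[-> -> ->].
exists v; first by rewrite mem_iota add0n ltnS leq_min vx.
by apply: map_f; rewrite IHl sz_t eqxx /=; exact/andP.
Qed.

Lemma all2_leq_nthP (s t : seq nat) : size s = size t ->
  reflect (forall k, k < size s -> nth 0 s k <= nth 0 t k) (all2 leq s t).
Proof.
elim: s t => [|x s IHs] [|y t] //= => [_|[/IHs le_st]]; first by constructor.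
apply: (iffP andP) => [[xy /le_st le_nth] [|k] // /le_nth //|le_nth].
by split; [apply: (le_nth 0) | apply/le_st => k; apply: (le_nth k.+1)].
Qed.

Section FfunSeq.

Variables n m : nat.

Definition seq_of_ffun (f : {ffun 'I_n -> 'I_m}) : seq nat :=
  [seq val (f k) | k <- enum 'I_n].

Lemma size_seq_of_ffun f : size (seq_of_ffun f) = n.
Proof. by rewrite size_map size_enum_ord. Qed.

Lemma nth_seq_of_ffun f (k : 'I_n) : nth 0 (seq_of_ffun f) k = f k.
Proof. by rewrite (nth_map k) ?size_enum_ord // nth_ord_enum. Qed.

Lemma seq_of_ffun_inj : injective seq_of_ffun.
Proof.
move=> f1 f2 eq_f; apply/ffunP => k; apply/val_inj.
by rewrite /= -!nth_seq_of_ffun eq_f.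
Qed.

End FfunSeq.

Lemma ferrers_setE la f :
  (f \in ferrers_set la) = (seq_of_ffun f \in subpart_seqs la (head 0 la)).
Proof.
have sz_f := size_seq_of_ffun f.
rewrite mem_subpart_seqs inE sz_f eqxx /= (path_sortedE geq_trans).
have -> : all (geq (head 0 la)) (seq_of_ffun f).
  by apply/allP => _ /mapP[k _ ->]; rewrite /= -ltnS.
congr andb.
  apply/forallP/idP => [decr | sorted_f k].
    apply/(sortedP 0) => k; rewrite sz_f => Sk.
    have /forallP/(_ (Ordinal Sk))/implyP := decr (Ordinal (ltnW Sk)).
    rewrite (nth_seq_of_ffun f (Ordinal Sk)) (nth_seq_of_ffun f (Ordinal (ltnW Sk))).
    by rewrite leqnSn; apply.
  apply/forallP => l; apply/implyP => le_kl; rewrite -!nth_seq_of_ffun.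
  by apply: (sorted_leq_nth geq_trans leqnn 0 sorted_f) le_kl; rewrite unfold_in /= sz_f.
apply/forallP/(all2_leq_nthP sz_f) => [le_f k | le_nth k]; rewrite ?sz_f.
  by move=> lt_k; rewrite (nth_seq_of_ffun f (Ordinal lt_k)) le_f.
by rewrite -nth_seq_of_ffun le_nth ?sz_f.
Qed.

Lemma N_nsubpart la : N la = nsubpart la (head 0 la).
Proof.
rewrite /N /nsubpart -(size_image (@seq_of_ffun _ _)).
apply/perm_size/uniq_perm; rewrite ?subpart_seqs_uniq //.
  by rewrite map_inj_uniq ?enum_uniq //; apply: seq_of_ffun_inj.
move=> s; apply/imageP/idP => [[f f_in ->] | s_in]; first by rewrite -ferrers_setE.
move: (s_in); rewrite mem_subpart_seqs /= (path_sortedE geq_trans).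
move=> /and3P[/eqP sz_s /andP[/allP le_s _] _].
pose f := [ffun k : 'I_(size la) => inord (nth 0 s k) : 'I_(head 0 la).+1].
have eq_s : seq_of_ffun f = s.
  apply: (@eq_from_nth _ 0) => [|k]; rewrite size_seq_of_ffun ?sz_s // => lt_k.
  rewrite (nth_seq_of_ffun f (Ordinal lt_k)) ffunE inordK //= ltnS.
  by apply: le_s; rewrite mem_nth ?sz_s.
by exists f; rewrite ?ferrers_setE eq_s.
Qed.

Lemma nsubpart_bounded l b : all (fun y => y <= b) l -> nsubpart l b = N l.
Proof.
rewrite N_nsubpart; case: l => //= x l /andP[xb _].
by rewrite !nsubpart_cons minnn (minn_idPl xb).
Qed.

Lemma nsubpart0 l : nsubpart l 0 = 1.
Proof. by elim: l => // x l IHl; rewrite nsubpart_cons minn0 big_nat1. Qed.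

(* Zero parts sit at the end of a sorted sequence and only allow the value 0. *)
Lemma nsubpart_filter_pos m b :
  sorted geq m -> nsubpart [seq x <- m | 0 < x] b = nsubpart m b.
Proof.
elim: m b => // x m IHm b sorted_xm; have sorted_m := path_sorted sorted_xm.
have [x0 | x_pos] := posnP x; last first.
  by rewrite /= x_pos !nsubpart_cons; apply: eq_bigr => v _; apply: IHm.
have /allP m_le0 : all (geq x) m by apply: order_path_min geq_trans sorted_xm.
rewrite /= x0 (@eq_in_filter _ _ pred0) ?filter_pred0; last first.
  by move=> y /m_le0; rewrite x0 /= lt0n -leqn0 => ->.
by rewrite nsubpart_cons min0n big_nat1 nsubpart0.
Qed.

Lemma N_filter_pos m b : sorted geq m -> all (fun y => y <= b) m ->
  N [seq x <- m | 0 < x] = nsubpart m b.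
Proof.
move=> sorted_m /allP le_b; rewrite -(nsubpart_filter_pos b sorted_m).
by rewrite nsubpart_bounded //; apply/allP => y; rewrite mem_filter => /andP[_ /le_b].
Qed.

Lemma sum_shift_ge (F : nat -> nat) j x b : j <= x ->
  \sum_(0 <= v < (minn x b).+1) (j <= v) * F (v - j)
  = (j <= b) * \sum_(0 <= u < (minn (x - j) (b - j)).+1) F u.
Proof.
move=> jx; have [jb | bj] := leqP j b; last first.
  rewrite mul0n big1_seq // => v; rewrite mem_index_iota => v_lt.
  by rewrite leqNgt (_ : v < j) //; lia.
rewrite mul1n (big_cat_nat (n := j)) /=; try lia.
rewrite big1_seq ?add0n => [|v]; last first.
  by rewrite mem_index_iota => v_lt; rewrite leqNgt (_ : v < j) //; lia.
rewrite -{1}(add0n j) big_addn.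
have -> : (minn x b).+1 - j = (minn (x - j) (b - j)).+1 by lia.
by apply: eq_bigr => u _; rewrite leq_addl addnK mul1n.
Qed.

Lemma nsubpart_corner p j q b : 0 < j -> all (fun y => j <= y) p ->
  nsubpart (p ++ j :: q) b
  = nsubpart (p ++ j.-1 :: q) b
    + (j <= b) * (nsubpart [seq y - j | y <- p] (b - j) * nsubpart q j).
Proof.
move=> j_pos; elim: p b => [|x p IHp] b /=.
  move=> _; rewrite !nsubpart_cons mul1n; have [jb | bj] := leqP j b.
    by rewrite (minn_idPl (leq_trans (leq_pred j) jb)) prednK // big_nat_recr //= mul1n.
  by rewrite (minn_idPr _) ?[false * _]mul0n ?addn0 //; lia.
move=> /andP[jx jp]; rewrite !nsubpart_cons.
under eq_bigr => v _ do rewrite (IHp v jp).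
rewrite big_split /= big_distrl /=; congr addn.
exact: (sum_shift_ge (fun u => nsubpart [seq y - j | y <- p] u * nsubpart q j)).
Qed.

Lemma all_le_head s : sorted geq s -> all (fun y => y <= head 0 s) s.
Proof. by case: s => //= x s /(order_path_min geq_trans) ->; rewrite leqnn. Qed.

Lemma sorted_geq_lower_cat p x y q :
  sorted geq (p ++ x :: q) -> y <= x -> path geq y q -> sorted geq (p ++ y :: q).
Proof.
rewrite !sorted_cat_cons => /andP[+ _] yx ->; rewrite andbT.
by case: p => //= z p; rewrite !rcons_path => /andP[-> /(leq_trans yx)].
Qed.

Section Corner.

Variables (la : seq nat) (i : nat).
Hypotheses (la_part : is_partition la) (i_lt : i < size la).
Hypothesis corner : (i.+1 == size la) || (nth 0 la i.+1 < nth 0 la i).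

Local Notation j := (nth 0 la i).
Local Notation h := (head 0 la).

Lemma la_sorted : sorted geq la.
Proof. by case/andP: la_part. Qed.

Lemma corner_split : la = take i la ++ j :: drop i.+1 la.
Proof. by rewrite -drop_nth // cat_take_drop. Qed.

Lemma corner_pos : 0 < j.
Proof. by move: la_part => /andP[_ /allP]; apply; rewrite mem_nth. Qed.

Lemma corner_le_head : j <= h.
Proof. by apply: (allP (all_le_head la_sorted)); rewrite mem_nth. Qed.

Lemma take_ge_corner : all (fun y => j <= y) (take i la).
Proof.
move: la_sorted; rewrite {1}corner_split sorted_cat_cons => /andP[+ _].
by rewrite -rev_sorted rev_rcons /= => /(order_path_min leq_trans); rewrite all_rev.
Qed.

Lemma path_corner_drop : path geq j (drop i.+1 la).
Proof. by move: la_sorted; rewrite {1}corner_split sorted_cat_cons => /andP[]. Qed.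

Lemma sorted_remove_corner : sorted geq (take i la ++ j.-1 :: drop i.+1 la).
Proof.
apply: (sorted_geq_lower_cat _ (leq_pred j)); first by rewrite -corner_split la_sorted.
move: path_corner_drop corner; case E: (drop i.+1 la) => [|y q] //= /andP[_ ->].
rewrite andbT => /orP[/eqP sz | ]; first by move: E; rewrite sz drop_size.
by rewrite -[i.+1]addn0 -nth_drop E /=; have := corner_pos; lia.
Qed.

Lemma N_remove_cell :
  N (remove_cell la i) = nsubpart (take i la ++ j.-1 :: drop i.+1 la) h.
Proof.
rewrite /remove_cell set_nthE i_lt (N_filter_pos (b := h)) ?sorted_remove_corner //.
move: (all_le_head la_sorted); rewrite [X in all _ X]corner_split !all_cat /=.
by case/and3P=> -> /(leq_trans (leq_pred j)) ->.
Qed.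

Lemma N_alpha_part :
  N (alpha_part la i j) = nsubpart [seq y - j | y <- take i la] (h - j).
Proof.
apply: N_filter_pos.
  rewrite sorted_map; apply: sub_sorted (take_sorted i la_sorted) => x y /= yx.
  exact: leq_sub2r.
apply/allP => _ /mapP[y /mem_take y_la ->]; apply: leq_sub2r.
exact: allP (all_le_head la_sorted) y y_la.
Qed.

Lemma N_beta_part : N (beta_part la i) = nsubpart (drop i.+1 la) j.
Proof. exact/esym/nsubpart_bounded/(order_path_min geq_trans path_corner_drop). Qed.

End Corner.

Theorem mainTheorem2 (la : seq nat) (i : nat) :
  is_partition la -> la != [::] -> i < size la ->
  (i.+1 == size la) || (nth 0 la i.+1 < nth 0 la i) ->
  let j := nth 0 la i in
  N la = N (remove_cell la i) * N [::]
         + N (alpha_part la i j) * N (beta_part la i)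
  /\ N la = N (remove_cell la i) + N (alpha_part la i j) * N (beta_part la i).
Proof.
move=> la_part _ i_lt corner j.
have -> : N [::] = 1 by rewrite N_nsubpart.
suff -> : N la = N (remove_cell la i) + N (alpha_part la i j) * N (beta_part la i).
  by rewrite muln1.
rewrite N_nsubpart {1}(corner_split i_lt).
rewrite nsubpart_corner ?corner_pos ?take_ge_corner ?corner_le_head // mul1n.
by rewrite N_remove_cell // N_alpha_part // N_beta_part.
Qed.
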